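(* Let $X$ be a random variable with CIGF $G_X$. Then $$G_X(\alpha,\beta)\le K_X(\beta)-\alpha K_X(\beta+1)\quad\text{for all }(\alpha,\beta)\in D_X\text{ with }\alpha\in[0,1],$$ $$G_X(\alpha,\beta)\le H_X(\alpha)-\beta H_X(\alpha+1)\quad\text{for all }(\alpha,\beta)\in D_X\text{ with }\beta\in[0,1].$$
   Context: For a random variable $X$ with CDF $F$ and survival function $\overline F=1-F$, let $l=\inf\{x:F(x)>0\}$, $r=\sup\{x:\overline F(x)>0\}$. The CIGF of $X$ is $G_X(\alpha,\beta)=\int_l^r [F(x)]^\alpha[\overline F(x)]^\beta\,dx$ on $D_X=\{(\alpha,\beta)\in\mathbb{R}^2: G_X(\alpha,\beta)<\infty\}$. The cumulative information generating measure is $H_X(\alpha)=G_X(\alpha,0)=\int_l^r[F(x)]^\alpha dx$ and the cumulative residual information generating measure is $K_X(\beta)=G_X(0,\beta)=\int_l^r[\overline F(x)]^\beta dx$. *)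

From HB Require Import structures.
From mathcomp Require Import all_boot all_order all_algebra.
From mathcomp Require Import all_classical all_reals all_analysis.
Set Implicit Arguments. Unset Strict Implicit. Unset Printing Implicit Defensive.
Import Order.TTheory GRing.Theory Num.Theory.
Import numFieldNormedType.Exports.
Local Open Scope classical_set_scope.
Local Open Scope ring_scope.

Section CIGF.
Context {d : measure_display} {T : measurableType d} {R : realType}
  (P : probability T R) (X : {RV P >-> R}).

Definition cdf (x : R) : R := fine (P [set w | X w <= x]).
Definition survival (x : R) : R := 1 - cdf x.

Definition lsupp : \bar R := ereal_inf [set x%:E | x in [set x : R | 0 < cdf x]].
Definition rsupp : \bar R := ereal_sup [set x%:E | x in [set x : R | 0 < survival x]].

Definition supp_itv : set R :=
  [set x : R | (lsupp < x%:E)%E /\ (x%:E < rsupp)%E].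

Definition CIGF (a b : R) : \bar R :=
  (\int[lebesgue_measure]_(x in supp_itv)
     ((cdf x `^ a) * (survival x `^ b))%:E)%E.

Definition CIGF_dom : set (R * R) := [set ab | (CIGF ab.1 ab.2 < +oo)%E].

(* H_X(alpha) = G_X(alpha,0),  K_X(beta) = G_X(0,beta) *)
Definition CIGM (a : R) : \bar R := CIGF a 0.
Definition CRIGM (b : R) : \bar R := CIGF 0 b.

End CIGF.

From Pilot Require Import Defs.
From HB Require Import structures.
From mathcomp Require Import all_boot all_order all_algebra.
From mathcomp Require Import all_classical all_reals all_analysis.
From mathcomp Require Import measurable_realfun lra.
Import Order.TTheory GRing.Theory Num.Theory.
Local Open Scope classical_set_scope.
Local Open Scope ring_scope.

(* On the open support (l, r) both F and 1 - F are positive, and the weighted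
   AM-GM (Bernoulli) inequality u^a <= 1 - a (1 - u) for a in [0, 1] gives
   pointwise  F^a Fbar^b + a Fbar^(b+1) <= Fbar^b, and symmetrically
   F^a Fbar^b + b F^(a+1) <= F^a.  Integrating over (l, r) and moving the
   finite integral K_X(b+1) (resp. H_X(a+1)) to the right-hand side yields
   the two bounds. *)

Lemma powR_le_Bernoulli (R : realType) (u a : R) : 0 < u -> 0 <= a <= 1 ->
  u `^ a <= 1 - a * (1 - u).
Proof.
move=> u0 /andP[a0 a1].
have [->|an0] := eqVneq a 0; first by rewrite powRr0 mul0r subr0.
have [->|an1] := eqVneq a 1; first by rewrite powRr1 ?(ltW u0) // mul1r subKr.
have a_gt0 : 0 < a by rewrite lt_neqAle eq_sym an0 a0.
have a1_gt0 : 0 < 1 - a by rewrite subr_gt0 lt_neqAle an1 a1.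
(* Young's inequality for u^a * 1 with the conjugate exponents 1/a, 1/(1-a) *)
have := @conjugate_powR R (u `^ a) 1 a^-1 (1 - a)^-1 (powR_ge0 _ _) ler01.
rewrite !invr_gt0 a_gt0 a1_gt0 !invrK subrKC => /(_ isT isT erefl).
rewrite -powRrM mulfV ?gt_eqF // powRr1 ?(ltW u0) // powR1 !mulr1 => young.
by apply: (le_trans young); lra.
Qed.

Lemma powRM_add_le (R : realType) (u v a b : R) :
  0 < u -> 0 < v -> u + v = 1 -> 0 <= a <= 1 ->
  u `^ a * v `^ b + a * v `^ (b + 1) <= v `^ b.
Proof.
move=> u0 v0 uv a01.
have v1 : 1 - u = v by rewrite -uv addrC addKr.
have ua : u `^ a <= 1 - a * v by rewrite -v1; exact: powR_le_Bernoulli.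
rewrite powRD ?(gt_eqF v0) ?implybT // powRr1 ?(ltW v0) //.
have vb := powR_ge0 v b.
have := ler_wpM2r vb ua; nra.
Qed.

Lemma ge0_integral_le_subZ d (T : measurableType d) (R : realType)
    (mu : {measure set T -> \bar R}) (D : set T) (f g h : T -> R) (c : R) :
  measurable D -> 0 <= c ->
  (forall x, D x -> 0 <= f x) -> (forall x, D x -> 0 <= h x) ->
  measurable_fun D f -> measurable_fun D g -> measurable_fun D h ->
  (forall x, D x -> f x + c * h x <= g x) ->
  (\int[mu]_(x in D) (h x)%:E < +oo)%E ->
  (\int[mu]_(x in D) (f x)%:E <=
   \int[mu]_(x in D) (g x)%:E - c%:E * \int[mu]_(x in D) (h x)%:E)%E.
Proof.
move=> mD c0 f0 h0 mf mg mh fgh hfin.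
have f0E x : D x -> (0 <= (f x)%:E)%E by move=> /f0; rewrite lee_fin.
have h0E x : D x -> (0 <= (h x)%:E)%E by move=> /h0; rewrite lee_fin.
have ch0 x : D x -> (0 <= c%:E * (h x)%:E)%E by move=> /h0E; exact: mule_ge0.
have mfE : measurable_fun D (EFin \o f) by exact/measurable_EFinP.
have mhE : measurable_fun D (EFin \o h) by exact/measurable_EFinP.
have mch : measurable_fun D (fun x => c%:E * (h x)%:E)%E.
  exact: emeasurable_funM (measurable_cst _) mhE.
have int_le : (\int[mu]_(x in D) ((f x)%:E + c%:E * (h x)%:E) <=
               \int[mu]_(x in D) (g x)%:E)%E.
  apply: ge0_le_integral => //.
  - by move=> x Dx; rewrite adde_ge0 ?f0E ?ch0.
  - exact: emeasurable_funD.
  - exact/measurable_EFinP.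
rewrite ge0_integralD // ge0_integralZl_EFin // in int_le.
have hge0 : (0 <= \int[mu]_(x in D) (h x)%:E)%E by exact: integral_ge0.
by rewrite leeBrDr // fin_numM // ge0_fin_numE.
Qed.

Section cdf_on_support.
Context d (T : measurableType d) (R : realType)
  (P : probability T R) (X : {RV P >-> R}).

Let measurable_le (x : R) : measurable [set w | X w <= x].
Proof.
have := measurable_funPT X measurableT _ (measurable_itv `]-oo, x]).
by rewrite setTI; congr measurable; apply/seteqP; split => w /=; rewrite in_itv.
Qed.

Lemma cdf_nondecreasing : nondecreasing_fun (Defs.cdf X).
Proof.
move=> x y xy; apply: fine_le; rewrite ?fin_num_measure //.
by apply: le_measure; rewrite ?inE // => w /= /le_trans; apply.
Qed.

Lemma survival_nonincreasing : nonincreasing_fun (survival X).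
Proof. by move=> x y xy; rewrite lerB // cdf_nondecreasing. Qed.

Lemma supp_itv_gt0 x : supp_itv X x -> 0 < Defs.cdf X x /\ 0 < survival X x.
Proof.
move=> [lx xr]; split.
- have [_ [y /= cy <-] yx] := ereal_inf_lt lx.
  by apply: (lt_le_trans cy); apply: cdf_nondecreasing; rewrite -lee_fin ltW.
- have [_ [y /= sy <-] xy] := ereal_sup_gt xr.
  by apply: (lt_le_trans sy); apply: survival_nonincreasing; rewrite -lee_fin ltW.
Qed.

Lemma measurable_supp_itv : measurable (supp_itv X).
Proof.
apply: is_interval_measurable => x y [lx _] [_ yr] z /andP[xz zy]; split.
- by apply: (lt_le_trans lx); rewrite lee_fin.
- by apply: (le_lt_trans _ yr); rewrite lee_fin.
Qed.

Lemma measurable_cdf_survival_powR a b : measurable_fun (supp_itv X)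
  (fun x => Defs.cdf X x `^ a * survival X x `^ b).
Proof.
apply: measurable_funM; apply: measurableT_comp (measurable_powR _) _.
- exact: nondecreasing_measurable measurable_supp_itv cdf_nondecreasing.
- exact: nonincreasing_measurable measurable_supp_itv survival_nonincreasing.
Qed.

Lemma CIGF_le_subZ (a b a' b' a'' b'' c : R) : 0 <= c ->
  (forall x, supp_itv X x ->
     Defs.cdf X x `^ a * survival X x `^ b
       + c * (Defs.cdf X x `^ a' * survival X x `^ b')
     <= Defs.cdf X x `^ a'' * survival X x `^ b'') ->
  (CIGF X a' b' < +oo)%E ->
  (CIGF X a b <= CIGF X a'' b'' - c%:E * CIGF X a' b')%E.
Proof.
move=> c0 pointwise fin; apply: ge0_integral_le_subZ => //.
- exact: measurable_supp_itv.
- by move=> x _; rewrite mulr_ge0 ?powR_ge0.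
- by move=> x _; rewrite mulr_ge0 ?powR_ge0.
all: exact: measurable_cdf_survival_powR.
Qed.

End cdf_on_support.

Theorem proposition5 (d : measure_display) (T : measurableType d) (R : realType)
  (P : probability T R) (X : {RV P >-> R}) :
  (forall a b : R, (a, b) \in CIGF_dom X -> 0 <= a <= 1 ->
     (CRIGM X (b + 1) < +oo)%E ->
     (CIGF X a b <= CRIGM X b - a%:E * CRIGM X (b + 1))%E) /\
  (forall a b : R, (a, b) \in CIGF_dom X -> 0 <= b <= 1 ->
     (CIGM X (a + 1) < +oo)%E ->
     (CIGF X a b <= CIGM X a - b%:E * CIGM X (a + 1))%E).
Proof.
have F_add_S x : Defs.cdf X x + survival X x = 1 by rewrite /survival addrC subrK.
split=> a b _ /[dup] /andP[c0 _] c01 fin; apply: CIGF_le_subZ fin => // x.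
- move=> /supp_itv_gt0[F0 S0]; rewrite !powRr0 !mul1r.
  exact: powRM_add_le.
- move=> /supp_itv_gt0[F0 S0]; rewrite !powRr0 !mulr1 mulrC.
  by apply: powRM_add_le; rewrite // addrC.
Qed.
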